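(* Let $F\subset\mathbb{Z}$ be a finite union of intervals of length $n$, and let $a=|\{s\in\mathbb{Z}: s+[0,n)\subset F\}|$. Suppose $u\in\mathcal{A}^F$ satisfies $|W_n(u)|=j<a$. Then every $n$-repeat cover $\mathcal{R}$ for $u$ satisfies $|A(\mathcal{R})|\ge a+n-j-1$.
   Context: $\mathcal{A}$ is a finite alphabet. Intervals are integer intervals, e.g. $[0,n)=\{0,\dots,n-1\}$, and $t+I=\{t+s:s\in I\}$. For $F\subset\mathbb{Z}$, $\mathcal{C}_n(F)=\{t+[0,n): t+[0,n)\subset F\}$. For $u\in\mathcal{A}^F$ and an interval $I\subset F$, $u_I$ denotes the restriction of $u$ to $I$, read as a word; $W_n(u)=\{u_I: I\in\mathcal{C}_n(F)\}$ is the set of distinct words of length $n$ appearing in $u$. A pair $(I_1,I_2)\in\mathcal{C}_n(F)\times\mathcal{C}_n(F)$ is an $n$-repeat for $u$ if $u_{I_1}=u_{I_2}$, $I_1\neq I_2$, and $I_1$ is the lexicographically (leftmost) minimal occurrence of the word $u_{I_1}$ in $u$. For $\mathcal{R}\subset\mathcal{C}_n(F)\times\mathcal{C}_n(F)$, $A(\mathcal{R})=\bigcup_{(I_1,I_2)\in\mathcal{R}}I_2$. $\mathcal{R}$ is an $n$-repeat cover for $u$ if every pair in $\mathcal{R}$ is an $n$-repeat for $u$ and for every $n$-repeat $(I_1,I_2)$ for $u$ we have $I_2\subset A(\mathcal{R})$. *)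

From HB Require Import structures.
From mathcomp Require Import all_boot all_order all_algebra.
Set Implicit Arguments. Unset Strict Implicit. Unset Printing Implicit Defensive.
Import Order.TTheory GRing.Theory Num.Theory.
Local Open Scope ring_scope.

Definition in_window (n : nat) (t x : int) : Prop := t <= x /\ x < t + n%:Z.

Definition unionF (n : nat) (S : seq int) (x : int) : Prop :=
  exists2 s, s \in S & in_window n s x.

Definition window_in (F : int -> Prop) (n : nat) (t : int) : Prop :=
  forall x, in_window n t x -> F x.

Definition word (A : Type) (u : int -> A) (n : nat) (t : int) : seq A :=
  [seq u (t + i%:Z) | i <- iota 0 n].

Definition Wn (A : Type) (F : int -> Prop) (u : int -> A) (n : nat) (w : seq A) : Prop :=
  exists t, window_in F n t /\ word u n t = w.

(* (t1+[0,n), t2+[0,n)) is an n-repeat for u (intervals identified with their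
   left endpoints; among intervals of equal length the lexicographic order is
   the order of left endpoints). *)
Definition is_repeat (A : Type) (F : int -> Prop) (u : int -> A) (n : nat)
    (p : int * int) : Prop :=
  [/\ window_in F n p.1, window_in F n p.2,
      word u n p.1 = word u n p.2, p.1 <> p.2 &
      forall t, window_in F n t -> word u n t = word u n p.1 -> p.1 <= t].

Definition AR (n : nat) (R : int * int -> Prop) (x : int) : Prop :=
  exists p, R p /\ in_window n p.2 x.

Definition is_repeat_cover (A : Type) (F : int -> Prop) (u : int -> A) (n : nat)
    (R : int * int -> Prop) : Prop :=
  (forall p, R p -> is_repeat F u n p) /\
  (forall p, is_repeat F u n p -> forall x, in_window n p.2 x -> AR n R x).

Definition card_is (T : eqType) (P : T -> Prop) (k : nat) : Prop :=
  exists s : seq T, [/\ uniq s, (forall x, x \in s <-> P x) & size s = k].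

From HB Require Import structures.
From mathcomp Require Import all_boot all_order all_algebra.
From mathcomp Require Import zify.
Import Order.TTheory GRing.Theory Num.Theory.

Set Implicit Arguments.
Unset Strict Implicit.
Unset Printing Implicit Defensive.

(* Call a window start t "first" if no window to its left carries the same
   word. First windows carry pairwise distinct words, so there are at most j
   of them and at least a - j windows are not first. Each non-first window t
   forms a repeat with the leftmost occurrence of its word, so every such
   window lies in A(R). Finally, k >= 1 distinct windows of length n cover at
   least k + n - 1 integers: their left endpoints, plus the n - 1 integers
   to the right of the largest one. *)

Section SeqExtremum.
Context {disp : Order.disp_t} {T : orderType disp}.
Local Open Scope order_scope.

Lemma seq_min_cond (s : seq T) (P : pred T) x : x \in s -> P x ->
  exists2 y, (y \in s) && P y & forall z, z \in s -> P z -> y <= z.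
Proof.
move=> xs Px; exists (\big[Order.min/x]_(z <- s | P z) z).
- rewrite big_seq_cond; apply: (big_ind (fun y => (y \in s) && P y)) => //=.
  - by rewrite xs.
  - by move=> y z; rewrite /Order.min; case: ifP.
- by move=> z zs Pz; apply: ge_bigmin_seq.
Qed.

Lemma seq_max (s : seq T) x : x \in s ->
  exists2 y, y \in s & forall z, z \in s -> z <= y.
Proof.
move=> xs; exists (\big[Order.max/x]_(z <- s) z).
- rewrite big_seq; apply: (big_ind (fun y => y \in s)) => //.
  by move=> y z; rewrite /Order.max; case: ifP.
- by move=> z zs; apply: le_bigmax_seq.
Qed.

End SeqExtremum.

Lemma card_is_uniq_leq (T : eqType) (P : T -> Prop) k (s : seq T) :
  card_is P k -> uniq s -> (forall x, x \in s -> P x) -> (size s <= k)%N.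
Proof. by move=> [s' [_ s'P <-]] us sP; apply: uniq_leq_size => // x /sP/s'P. Qed.

Lemma card_union_windows_ge (n : nat) (X : int -> Prop) (D : seq int) m :
  (0 < n)%N -> uniq D -> (0 < size D)%N ->
  (forall t, t \in D -> forall x, in_window n t x -> X x) ->
  card_is X m -> (size D + n.-1 <= m)%N.
Proof.
move=> n_gt0 uD D_gt0 DX Xm.
have [M MD maxM] := seq_max (mem_nth (0 : int) D_gt0).
pose tail := [seq M + i%:Z | i <- iota 1 n.-1]%R.
have tail_out : ~~ has (mem D) tail.
  apply/hasPn => y /mapP[i]; rewrite mem_iota => /andP[i_gt0 _] ->.
  by apply/negP => /maxM; lia.
have utail : uniq tail by rewrite map_inj_uniq ?iota_uniq // => x y /addrI [].
have <- : size tail = n.-1 by rewrite size_map size_iota.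
rewrite -size_cat.
apply: card_is_uniq_leq Xm _ _; first by rewrite cat_uniq uD tail_out utail.
move=> x; rewrite mem_cat => /orP[xD | /mapP[i]].
- by apply: DX xD _ _; rewrite /in_window; lia.
- by rewrite mem_iota => /andP[i1 i2] ->; apply: DX MD _ _; rewrite /in_window; lia.
Qed.

Section FirstOccurrences.
Variables (A : eqType) (F : int -> Prop) (u : int -> A) (n : nat) (sW : seq int).
Hypothesis sW_windows : forall t, t \in sW <-> window_in F n t.
Local Open Scope ring_scope.

Definition first_occurrence (t : int) : bool :=
  all (fun t' => (word u n t' != word u n t) || (t <= t')) sW.

Lemma count_first_occurrence_le j :
  uniq sW -> card_is (Wn F u n) j -> (count first_occurrence sW <= j)%N.
Proof.
move=> uW Wj; rewrite -size_filter -(size_map (word u n)).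
apply: card_is_uniq_leq Wj _ _.
- rewrite map_inj_in_uniq ?filter_uniq // => x y.
  rewrite !mem_filter => /andP[fx xW] /andP[fy yW] wxy; apply/eqP.
  move/allP: fx => /(_ y yW); move/allP: fy => /(_ x xW).
  by rewrite wxy eqxx /= => yx xy; rewrite eq_le xy yx.
- move=> w /mapP[t]; rewrite mem_filter => /andP[_ tW] ->.
  by exists t; split => //; apply/sW_windows.
Qed.

Lemma repeat_of_not_first_occurrence t :
  t \in sW -> ~~ first_occurrence t -> exists t0, is_repeat F u n (t0, t).
Proof.
move=> tW not_first.
have [t0 /andP[t0W /eqP wt0] min_t0] :=
  seq_min_cond (P := fun z => word u n z == word u n t) tW (eqxx _).
exists t0; split => //=; try exact/sW_windows.
- move=> t0t; subst t0; apply: (negP not_first); apply/allP => z zW.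
  by case: eqP => //= wz; apply: min_t0 => //; apply/eqP.
- by move=> t' t'W wt'; apply: min_t0; [apply/sW_windows | rewrite wt' wt0].
Qed.

End FirstOccurrences.

Theorem mainTheorem4 (A : finType) (n : nat) (S : seq int) (u : int -> A)
    (a j : nat) (R : int * int -> Prop) (m : nat) :
  (0 < n)%N ->
  card_is (window_in (unionF n S) n) a ->
  card_is (Wn (unionF n S) u n) j ->
  (j < a)%N ->
  is_repeat_cover (unionF n S) u n R ->
  card_is (AR n R) m ->
  (a + n - j - 1 <= m)%N.
Proof.
move=> n_gt0 [sW [uW sW_windows <-]] Wj ja [_ covers] Rm.
pose D := filter (predC (first_occurrence u n sW)) sW.
have D_large : (size sW - j <= size D)%N.
  have := count_first_occurrence_le sW_windows uW Wj.
  by rewrite size_filter -(count_predC (first_occurrence u n sW) sW); lia.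
have D_covered t : t \in D -> forall x, in_window n t x -> AR n R x.
  rewrite mem_filter => /andP[not_first tW].
  have [t0 rep] := repeat_of_not_first_occurrence sW_windows tW not_first.
  exact: covers rep.
have D_gt0 : (0 < size D)%N by lia.
apply: leq_trans (card_union_windows_ge n_gt0 (filter_uniq _ uW) D_gt0 D_covered Rm).
rewrite -/D -subn1; lia.
Qed.
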